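(* Let $f,g:[0,\infty)\to[0,\infty)$, let $0<a<b<\infty$, and suppose $fg$ is Lebesgue integrable on $[a,b]$. Let $q>1$ and suppose $f^q$ and $g^{q/(q-1)}$ are both $(1,1)$-GA-convex on $[0,b]$. Then \[ \int_a^b f(x)g(x)\,dx\le\Bigl\{f^q(a)[L(a,b)-a]+[b-L(a,b)]f^q(b)\Bigr\}^{1/q}\Bigl\{g^{q/(q-1)}(a)[L(a,b)-a]+[b-L(a,b)]g^{q/(q-1)}(b)\Bigr\}^{1-1/q}. \]
   Context: For $c>0$, $h:[0,c]\to\mathbb{R}$ and $(\alpha,m)\in(0,1]^2$, $h$ is called $(\alpha,m)$-GA-convex on $[0,c]$ if $h\bigl(x^\lambda y^{m(1-\lambda)}\bigr)\le\lambda^\alpha h(x)+m(1-\lambda^\alpha)h(y)$ for all $x,y\in[0,c]$ and all $\lambda\in[0,1]$ (with the convention $0^0=1$). For $x,y>0$, $x\neq y$, the logarithmic mean is $L(x,y)=\frac{y-x}{\ln y-\ln x}$. *)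

From Stdlib Require Import Reals Lra.
Open Scope R_scope.

(* Real power x^y for x >= 0, with 0^0 = 1 and 0^y = 0 for y <> 0
   (Stdlib's Rpower 0 y = 1 for all y, which is not the intended convention). *)
Definition rpow (x y : R) : R :=
  if Req_EM_T x 0 then (if Req_EM_T y 0 then 1 else 0) else Rpower x y.

Definition GA_convex (alpha m c : R) (h : R -> R) : Prop :=
  forall x y lam : R,
    0 <= x <= c -> 0 <= y <= c -> 0 <= lam <= 1 ->
    h (rpow x lam * rpow y (m * (1 - lam)))
      <= rpow lam alpha * h x + m * (1 - rpow lam alpha) * h y.

Definition logmean (x y : R) : R := (y - x) / (ln y - ln x).

(* A (1,1)-GA-convex h satisfies h(a^t b^(1-t)) <= t h(a) + (1-t) h(b); solving
   x = a^t b^(1-t) gives h(x) <= t(x) h(a) + (1 - t(x)) h(b) on [a,b] with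
   t(x) = (ln b - ln x)/(ln b - ln a), whose integral over [a,b] is L(a,b) - a.
   Apply this to f^q and g^p, p = q/(q-1), and bound f g pointwise by Young's
   inequality f g <= U^(1/q) V^(1/p) (f^q/(q U) + g^p/(p V)), where U and V are
   the integrals of the two majorants: with f^q and g^p replaced by their
   majorants, the bracket integrates to 1/q + 1/p = 1. *)

From Stdlib Require Import Reals Lra.
From Coquelicot Require Import Coquelicot.
Open Scope R_scope.

Lemma rpow_ge0 x y : 0 <= rpow x y.
Proof.
  unfold rpow; destruct (Req_EM_T x 0); [destruct (Req_EM_T y 0); lra|].
  left; apply exp_pos.
Qed.

Lemma rpow_0l y : y <> 0 -> rpow 0 y = 0.
Proof.
  intros Hy; unfold rpow.
  destruct (Req_EM_T 0 0); [|lra]; destruct (Req_EM_T y 0); lra.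
Qed.

Lemma rpow_Rpower x y : 0 < x -> rpow x y = Rpower x y.
Proof. intros Hx; unfold rpow; destruct (Req_EM_T x 0); [lra|reflexivity]. Qed.

Lemma rpow_1r x : 0 <= x -> rpow x 1 = x.
Proof.
  intros [Hx|<-]; [rewrite rpow_Rpower by exact Hx; apply Rpower_1, Hx|].
  apply rpow_0l; lra.
Qed.

Lemma rpow_rpowK x r s : 0 <= x -> r <> 0 -> r * s = 1 -> rpow (rpow x r) s = x.
Proof.
  intros [Hx|<-] Hr Hrs.
  - rewrite (rpow_Rpower x), rpow_Rpower by (try apply exp_pos; exact Hx).
    rewrite Rpower_mult, Hrs; apply Rpower_1, Hx.
  - rewrite rpow_0l by exact Hr; apply rpow_0l; intros ->; lra.
Qed.

Lemma exp_le_exp x y : x <= y -> exp x <= exp y.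
Proof. intros [Hxy|<-]; [left; apply exp_increasing, Hxy | apply Rle_refl]. Qed.

Lemma ln_le_sub1 z : 0 < z -> ln z <= z - 1.
Proof. intros Hz; pose proof (exp_ineq1_le (ln z)); rewrite exp_ln in H; lra. Qed.

Lemma ln_lt_sub1 z : 0 < z -> z <> 1 -> ln z < z - 1.
Proof.
  intros Hz Hz1.
  assert (Hln : ln z <> 0)
    by (intros E; apply Hz1; rewrite <- (exp_ln z), E, exp_0 by exact Hz; reflexivity).
  pose proof (exp_ineq1 _ Hln); rewrite exp_ln in H; lra.
Qed.

Lemma Rpower_amgm th X Y : 0 < th < 1 -> 0 < X -> 0 < Y ->
  Rpower X th * Rpower Y (1 - th) <= th * X + (1 - th) * Y.
Proof.
  intros Hth HX HY.
  set (M := th * X + (1 - th) * Y).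
  assert (HM : 0 < M) by (unfold M; nra).
  (* concavity of ln, from ln z <= z - 1 at z = X/M and z = Y/M *)
  assert (HXM := ln_le_sub1 (X / M) ltac:(apply Rdiv_lt_0_compat; lra)).
  assert (HYM := ln_le_sub1 (Y / M) ltac:(apply Rdiv_lt_0_compat; lra)).
  rewrite ln_div in HXM, HYM by lra.
  assert (Hsum : th * (X / M) + (1 - th) * (Y / M) = M / M) by (unfold M at 3; field; lra).
  rewrite Rdiv_diag in Hsum by lra.
  unfold Rpower; rewrite <- exp_plus, <- (exp_ln M) by exact HM.
  apply exp_le_exp.
  assert (H1 := Rmult_le_compat_l th _ _ ltac:(lra) HXM).
  assert (H2 := Rmult_le_compat_l (1 - th) _ _ ltac:(lra) HYM).
  lra.
Qed.

Lemma rpow_young th X Y U V : 0 < th < 1 -> 0 <= X -> 0 <= Y -> 0 < U -> 0 < V ->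
  rpow X th * rpow Y (1 - th)
    <= Rpower U th * Rpower V (1 - th) * (th * X / U + (1 - th) * Y / V).
Proof.
  intros Hth HX HY HU HV.
  assert (HK : 0 < Rpower U th * Rpower V (1 - th)) by (apply Rmult_lt_0_compat; apply exp_pos).
  assert (Hmean : 0 <= th * X / U + (1 - th) * Y / V)
    by (apply Rplus_le_le_0_compat; apply Rdiv_le_0_compat; nra).
  destruct HX as [HX|<-]; [destruct HY as [HY|<-]|].
  - rewrite !rpow_Rpower by assumption.
    assert (HXU : 0 < X / U) by (apply Rdiv_lt_0_compat; assumption).
    assert (HYV : 0 < Y / V) by (apply Rdiv_lt_0_compat; assumption).
    replace (Rpower X th * Rpower Y (1 - th))
      with (Rpower U th * Rpower V (1 - th) * (Rpower (X / U) th * Rpower (Y / V) (1 - th))).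
    + apply Rmult_le_compat_l; [lra|].
      rewrite <- !Rmult_div_assoc; apply Rpower_amgm; assumption.
    + transitivity ((Rpower U th * Rpower (X / U) th)
                      * (Rpower V (1 - th) * Rpower (Y / V) (1 - th))); [ring|].
      rewrite !Rpower_mult_distr by assumption.
      replace (U * (X / U)) with X by (field; lra).
      replace (V * (Y / V)) with Y by (field; lra).
      reflexivity.
  - rewrite (rpow_0l (1 - th)) by lra; nra.
  - rewrite (rpow_0l th) by lra; nra.
Qed.

Lemma RInt_le_is_RInt (phi w : R -> R) (a b K : R) :
  a <= b -> ex_RInt phi a b -> is_RInt w a b K ->
  (forall x, a <= x <= b -> phi x <= w x) -> RInt phi a b <= K.
Proof.
  intros hab Hphi Hw Hle.
  apply (is_RInt_le phi w a b); [exact hab | | exact Hw |].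
  - exact (@RInt_correct R_CompleteNormedModule phi a b Hphi).
  - intros x Hx; apply Hle; lra.
Qed.

Lemma is_RInt_zero (a b : R) : is_RInt (fun _ => 0) a b 0.
Proof.
  assert (H := @is_RInt_const R_NormedModule a b 0).
  change (scal (b - a) 0) with ((b - a) * 0) in H.
  rewrite Rmult_0_r in H; exact H.
Qed.

Lemma RInt_le0 (phi : R -> R) (a b : R) :
  a <= b -> ex_RInt phi a b -> (forall x, a <= x <= b -> phi x <= 0) -> RInt phi a b <= 0.
Proof. intros; apply (RInt_le_is_RInt phi (fun _ => 0)); auto using is_RInt_zero. Qed.

(* With t the logarithmic weight below, this is the bound a GA-convex function
   gets from its endpoint values. *)
Definition weighted_majorant (t : R -> R) (a b : R) (u : R -> R) (Fa Fb : R) : Prop :=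
  forall x, a <= x <= b -> 0 <= u x <= t x * Fa + (1 - t x) * Fb.

Section HolderAffine.

Variables (t : R -> R) (a b Ta Tb : R).
Hypotheses (hab : a <= b) (hTa : 0 < Ta) (hTb : 0 < Tb)
  (ht : is_RInt t a b Ta) (ht' : is_RInt (fun x => 1 - t x) a b Tb).

Lemma is_RInt_weighted A B :
  is_RInt (fun x => t x * A + (1 - t x) * B) a b (A * Ta + Tb * B).
Proof.
  assert (H := @is_RInt_plus R_NormedModule _ _ a b _ _
                 (is_RInt_scal _ _ _ A _ ht) (is_RInt_scal _ _ _ B _ ht')).
  change (is_RInt (fun x => A * t x + B * (1 - t x)) a b (A * Ta + B * Tb)) in H.
  rewrite (Rmult_comm Tb).
  revert H; apply is_RInt_ext; intros x _.
  change (A * t x + B * (1 - t x) = t x * A + (1 - t x) * B); ring.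
Qed.

Lemma weighted_majorant_eq0 u Fa Fb :
  0 <= Fa -> 0 <= Fb -> weighted_majorant t a b u Fa Fb -> Fa * Ta + Tb * Fb <= 0 ->
  forall x, a <= x <= b -> u x = 0.
Proof.
  intros HFa HFb Hu HU x Hx.
  assert (Fa = 0 /\ Fb = 0) as [-> ->] by (split; nra).
  specialize (Hu x Hx); lra.
Qed.

Lemma RInt_le_holder (phi u v : R -> R) th Fa Fb Ga Gb :
  0 < th < 1 -> 0 <= Fa -> 0 <= Fb -> 0 <= Ga -> 0 <= Gb ->
  weighted_majorant t a b u Fa Fb -> weighted_majorant t a b v Ga Gb ->
  ex_RInt phi a b ->
  (forall x, a <= x <= b -> phi x <= rpow (u x) th * rpow (v x) (1 - th)) ->
  RInt phi a b <= rpow (Fa * Ta + Tb * Fb) th * rpow (Ga * Ta + Tb * Gb) (1 - th).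
Proof.
  intros Hth HFa HFb HGa HGb Hu Hv Hphi Hle.
  set (U := Fa * Ta + Tb * Fb); set (V := Ga * Ta + Tb * Gb).
  assert (Hrhs : 0 <= rpow U th * rpow V (1 - th)) by (apply Rmult_le_pos; apply rpow_ge0).
  destruct (Rle_lt_dec U 0) as [HU|HU]; [|destruct (Rle_lt_dec V 0) as [HV|HV]].
  - apply (Rle_trans _ 0); [apply RInt_le0; [exact hab | exact Hphi |] | exact Hrhs].
    intros x Hx; specialize (Hle x Hx).
    rewrite (weighted_majorant_eq0 u Fa Fb HFa HFb Hu HU x Hx), rpow_0l in Hle by lra; lra.
  - apply (Rle_trans _ 0); [apply RInt_le0; [exact hab | exact Hphi |] | exact Hrhs].
    intros x Hx; specialize (Hle x Hx).
    rewrite (weighted_majorant_eq0 v Ga Gb HGa HGb Hv HV x Hx), (rpow_0l (1 - th)) in Hle by lra.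
    lra.
  - rewrite !rpow_Rpower by assumption.
    set (K := Rpower U th * Rpower V (1 - th)).
    assert (HK : 0 < K) by (apply Rmult_lt_0_compat; apply exp_pos).
    set (A := K * (th * Fa / U + (1 - th) * Ga / V)).
    set (B := K * (th * Fb / U + (1 - th) * Gb / V)).
    replace K with (A * Ta + Tb * B) by (unfold A, B, U, V in *; field; lra).
    apply (RInt_le_is_RInt phi (fun x => t x * A + (1 - t x) * B));
      [exact hab | exact Hphi | apply is_RInt_weighted |].
    intros x Hx.
    destruct (Hu x Hx) as [Hu0 Hu1]; destruct (Hv x Hx) as [Hv0 Hv1].
    apply (Rle_trans _ _ _ (Hle x Hx)).
    apply (Rle_trans _ _ _ (rpow_young th (u x) (v x) U V Hth Hu0 Hv0 HU HV)); fold K.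
    replace (t x * A + (1 - t x) * B)
      with (K * (th * (t x * Fa + (1 - t x) * Fb) / U
                 + (1 - th) * (t x * Ga + (1 - t x) * Gb) / V))
      by (unfold A, B; field; lra).
    apply Rmult_le_compat_l; [lra|].
    apply Rplus_le_compat; unfold Rdiv; apply Rmult_le_compat_r;
      try (left; apply Rinv_0_lt_compat; assumption); nra.
Qed.

End HolderAffine.

Definition logweight (a b x : R) : R := (ln b - ln x) / (ln b - ln a).

Lemma ln_sub_gt0 a b : 0 < a < b -> 0 < ln b - ln a.
Proof. intros Hab; pose proof (ln_increasing a b ltac:(lra) ltac:(lra)); lra. Qed.

Lemma logweight_bounds a b x : 0 < a < b -> a <= x <= b -> 0 <= logweight a b x <= 1.
Proof.
  intros Hab Hx; pose proof (ln_sub_gt0 a b Hab).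
  assert (ln a <= ln x) by (apply ln_le; lra).
  assert (ln x <= ln b) by (apply ln_le; lra).
  unfold logweight; split; [apply Rdiv_le_0_compat; lra|].
  replace ((ln b - ln x) / (ln b - ln a)) with (1 - (ln x - ln a) / (ln b - ln a))
    by (field; lra).
  enough (0 <= (ln x - ln a) / (ln b - ln a)) by lra.
  apply Rdiv_le_0_compat; lra.
Qed.

(* x = a^t b^(1-t) for t = logweight a b x. *)
Lemma GA_convex11_le_logweight h a b x : 0 < a < b -> a <= x <= b -> GA_convex 1 1 b h ->
  h x <= logweight a b x * h a + (1 - logweight a b x) * h b.
Proof.
  intros Hab Hx Hh; pose proof (ln_sub_gt0 a b Hab).
  assert (Ht := logweight_bounds a b x Hab Hx).
  set (t := logweight a b x) in *.
  assert (Hxt : rpow a t * rpow b (1 * (1 - t)) = x).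
  { rewrite !rpow_Rpower by lra; unfold Rpower; rewrite <- exp_plus.
    replace (t * ln a + 1 * (1 - t) * ln b) with (ln x) by (unfold t, logweight; field; lra).
    apply exp_ln; lra. }
  assert (Hconv := Hh a b t ltac:(lra) ltac:(lra) Ht).
  rewrite Hxt, rpow_1r in Hconv by lra; lra.
Qed.

Lemma is_RInt_logweight a b : 0 < a < b -> is_RInt (logweight a b) a b (logmean a b - a).
Proof.
  intros Hab; pose proof (ln_sub_gt0 a b Hab).
  set (D := ln b - ln a) in *.
  replace (logmean a b - a)
    with (minus ((b * ln b - b * ln b + b) / D) ((a * ln b - a * ln a + a) / D))
    by (unfold minus, plus, opp, logmean; simpl; fold D;
        replace (ln a) with (ln b - D) by (unfold D; ring); field; lra).
  apply (is_RInt_derive (fun x => (x * ln b - x * ln x + x) / D)).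
  - intros x Hx; rewrite Rmin_left, Rmax_right in Hx by lra.
    auto_derive; [lra|]. unfold logweight; fold D; field; lra.
  - intros x Hx; rewrite Rmin_left, Rmax_right in Hx by lra.
    apply (@ex_derive_continuous R_AbsRing R_NormedModule); unfold logweight; auto_derive; lra.
Qed.

Lemma is_RInt_logweight_compl a b : 0 < a < b ->
  is_RInt (fun x => 1 - logweight a b x) a b (b - logmean a b).
Proof.
  intros Hab.
  assert (H := @is_RInt_minus R_NormedModule _ _ a b _ _
                 (is_RInt_const a b 1) (is_RInt_logweight a b Hab)).
  change (is_RInt (fun x => 1 - logweight a b x) a b ((b - a) * 1 - (logmean a b - a))) in H.
  replace (b - logmean a b) with ((b - a) * 1 - (logmean a b - a)) by ring; exact H.
Qed.

Lemma logmean_gt_l a b : 0 < a < b -> a < logmean a b.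
Proof.
  intros Hab; pose proof (ln_sub_gt0 a b Hab).
  assert (Hln := ln_lt_sub1 (b / a) ltac:(apply Rdiv_lt_0_compat; lra)
                  ltac:(intros E; apply Rdiv_diag_uniq in E; lra)).
  rewrite ln_div in Hln by lra.
  replace (logmean a b) with (a + (b - a - a * (ln b - ln a)) / (ln b - ln a))
    by (unfold logmean; field; lra).
  enough (0 < (b - a - a * (ln b - ln a)) / (ln b - ln a)) by lra.
  apply Rdiv_lt_0_compat; [|lra].
  apply (Rmult_lt_compat_l a) in Hln; [|lra].
  replace (a * (b / a - 1)) with (b - a) in Hln by (field; lra); lra.
Qed.

Lemma logmean_lt_r a b : 0 < a < b -> logmean a b < b.
Proof.
  intros Hab; pose proof (ln_sub_gt0 a b Hab).
  assert (Hln := ln_lt_sub1 (a / b) ltac:(apply Rdiv_lt_0_compat; lra)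
                  ltac:(intros E; apply Rdiv_diag_uniq in E; lra)).
  rewrite ln_div in Hln by lra.
  replace (logmean a b) with (b - (b * (ln b - ln a) - (b - a)) / (ln b - ln a))
    by (unfold logmean; field; lra).
  enough (0 < (b * (ln b - ln a) - (b - a)) / (ln b - ln a)) by lra.
  apply Rdiv_lt_0_compat; [|lra].
  apply (Rmult_lt_compat_l b) in Hln; [|lra].
  replace (b * (a / b - 1)) with (a - b) in Hln by (field; lra); lra.
Qed.

Theorem corollary3p8
  (f g : R -> R) (a b q : R)
  (hf : forall x, 0 <= x -> 0 <= f x)
  (hg : forall x, 0 <= x -> 0 <= g x)
  (hab : 0 < a < b)
  (pr : Riemann_integrable (fun x => f x * g x) a b)
  (hq : 1 < q)
  (hfc : GA_convex 1 1 b (fun x => rpow (f x) q))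
  (hgc : GA_convex 1 1 b (fun x => rpow (g x) (q / (q - 1)))) :
  RiemannInt pr <=
    rpow (rpow (f a) q * (logmean a b - a) + (b - logmean a b) * rpow (f b) q) (1 / q) *
    rpow (rpow (g a) (q / (q - 1)) * (logmean a b - a)
          + (b - logmean a b) * rpow (g b) (q / (q - 1))) (1 - 1 / q).
Proof.
  set (p := q / (q - 1)) in *.
  assert (Hp : 0 < p) by (apply Rdiv_lt_0_compat; lra).
  assert (Hth : 0 < 1 / q < 1).
  { split; [apply Rdiv_lt_0_compat; lra|].
    unfold Rdiv; rewrite Rmult_1_l, <- Rinv_1; apply Rinv_1_lt_contravar; lra. }
  rewrite <- RInt_Reals.
  apply (RInt_le_holder (logweight a b) a b _ _ ltac:(lra)
           (proj2 (Rlt_0_minus _ _) (logmean_gt_l a b hab))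
           (proj2 (Rlt_0_minus _ _) (logmean_lt_r a b hab))
           (is_RInt_logweight a b hab) (is_RInt_logweight_compl a b hab)
           _ (fun x => rpow (f x) q) (fun x => rpow (g x) p));
    try apply rpow_ge0; try exact Hth.
  - intros x Hx; split; [apply rpow_ge0|].
    apply (GA_convex11_le_logweight (fun x => rpow (f x) q)); assumption.
  - intros x Hx; split; [apply rpow_ge0|].
    apply (GA_convex11_le_logweight (fun x => rpow (g x) p)); assumption.
  - apply ex_RInt_Reals_1, pr.
  - intros x Hx.
    rewrite rpow_rpowK, rpow_rpowK;
      solve [lra | apply hf; lra | apply hg; lra | unfold p; field; lra].
Qed.
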